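(* Let $\xi\in W^{1,1}(0,\infty)$ be nonnegative with $\dot\xi(t)\le-\xi(0)\xi(t)$ for a.e. $t>0$. Let $x\in W^{1,1}_{\rm loc}(0,\infty)$ and $y\in L^1_{\rm loc}(0,\infty)$ be nonnegative functions, let $a>0$, $C>0$, $\delta\in(0,1)$ be constants, and set $\mu=\min\{a,\xi(0)(1-\delta)\}$. Assume that for a.e. $t>0$ $$\dot x(t)+a\,x(t)+y(t)\le C+\delta\int_0^t\xi(t-\tau)\,y(\tau)\,d\tau.$$ Then $x(t)\le\max\{x(0),C/\mu\}$ for all $t>0$. *)

From HB Require Import structures.
From mathcomp Require Import all_boot all_order all_algebra.
From mathcomp Require Import all_classical all_reals all_analysis.
Set Implicit Arguments. Unset Strict Implicit. Unset Printing Implicit Defensive.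
Import Order.TTheory GRing.Theory Num.Theory.
Import numFieldNormedType.Exports.
Local Open Scope classical_set_scope.
Local Open Scope ring_scope.

Notation leb := (@lebesgue_measure _).

Definition L1loc {R : realType} (f : R -> R) : Prop :=
  forall T : R, 0 < T -> leb.-integrable `[0, T] (EFin \o f).

Definition L1 {R : realType} (f : R -> R) : Prop :=
  leb.-integrable `[0, +oo[ (EFin \o f).

(* (x, dx) : x in W^{1,1}_loc with weak derivative dx, i.e. dx in L^1_loc
   and x is the (absolutely continuous) primitive x t = x 0 + int_0^t dx. *)
Definition W11loc {R : realType} (x dx : R -> R) : Prop :=
  L1loc dx /\
  forall t : R, 0 <= t -> x t = x 0 + Rintegral leb `[0, t] dx.

Definition W11 {R : realType} (x dx : R -> R) : Prop :=
  L1 x /\ L1 dx /\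
  forall t : R, 0 <= t -> x t = x 0 + Rintegral leb `[0, t] dx.

Definition kconv0 {R : realType} (xi y : R -> R) (t : R) : R :=
  Rintegral leb `[0, t] (fun tau => xi (t - tau) * y tau).

(* No derivative is ever taken.  A function f on [s, t] whose increments satisfy
   f v - f u <= (v - u) (c (v - u) + g v - g u) cannot increase: summing over a
   uniform partition of mesh h bounds f t - f s by h times a constant.  This yields
   a Gronwall lemma for increments, applied first to xi' <= - xi(0) xi, which gives
   xi t <= xi(0) e^(- xi(0) t), and then to
     W t = x t + e^(- xi(0) t) \int_0^t e^(xi(0) s) y(s) ds - C / mu.
   By the bound on xi, the memory term delta \int_0^t xi(t - s) y(s) ds is at most
   delta xi(0) times the second summand of W, and differentiating that summand
   produces - y(t), which absorbs the y(t) of the hypothesis.  Since mu <= a and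
   mu <= xi(0) (1 - delta), W decays at rate mu: e^(mu t) W t <= W 0 = x 0 - C / mu. *)

From HB Require Import structures.
From mathcomp Require Import all_boot all_order all_algebra.
From mathcomp Require Import all_classical all_reals all_analysis.
From mathcomp Require Import ring lra measurable_realfun.
Import Order.TTheory GRing.Theory Num.Theory.
Import numFieldNormedType.Exports.
Local Open Scope classical_set_scope.
Local Open Scope ring_scope.

Set Implicit Arguments. Unset Strict Implicit. Unset Printing Implicit Defensive.

Section increments.
Context {R : realType}.
Implicit Types (f g : R -> R) (c s t : R).

Lemma expRN_le_taylor2 (h : R) : 0 <= h -> expR (- h) <= 1 - h + h * h.
Proof.
move=> h0.
have expNh_lb : 1 - h <= expR (- h) by have := expR_ge1Dx (- h).
(* e^h e^(-h) = 1 and e^h >= 1 + h give e^(-h) <= 1 - h e^(-h) *)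
have : expR (- h) * (1 + h) <= 1.
  rewrite -[leRHS](expRxMexpNx_1 h) [leRHS]mulrC.
  by apply: ler_wpM2l; [exact: expR_ge0 | exact: expR_ge1Dx].
nra.
Qed.

Lemma small_increments_mesh f g c s t (n : nat) : s <= t -> (0 < n)%N ->
  (forall u v, s <= u -> u <= v -> v <= t ->
     f v - f u <= (v - u) * (c * (v - u) + (g v - g u))) ->
  f t - f s <= (t - s) / n%:R * (c * (t - s) + (g t - g s)).
Proof.
move=> st n0 incr; set h := (t - s) / n%:R.
have h0 : 0 <= h by rewrite /h divr_ge0 ?subr_ge0.
have nh : n%:R * h = t - s.
  by rewrite /h mulrC -mulrA mulVf ?mulr1 // pnatr_eq0 -lt0n.
suff telescope : forall i : nat, (i <= n)%N ->
    f (s + i%:R * h) - f s <= h * (c * (i%:R * h) + (g (s + i%:R * h) - g s)).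
  by have := telescope n (leqnn n); rewrite nh (addrC s) subrK.
elim=> [|i IH] lt_in; first by rewrite mul0r addr0 !subrr mulr0 add0r mulr0.
have {IH} := IH (ltnW lt_in).
have ih0 : 0 <= i%:R * h by rewrite mulr_ge0.
have ihn : i.+1%:R * h <= n%:R * h by rewrite ler_wpM2r // ler_nat.
rewrite -natr1 mulrDl mul1r in ihn *.
have := incr (s + i%:R * h) (s + (i%:R * h + h)).
have -> : s + (i%:R * h + h) - (s + i%:R * h) = h by ring.
move=> /(_ ltac:(lra) ltac:(lra) ltac:(lra)); nra.
Qed.

Lemma le_of_small_increments f g c s t : s <= t ->
  (forall u v, s <= u -> u <= v -> v <= t ->
     f v - f u <= (v - u) * (c * (v - u) + (g v - g u))) ->
  f t <= f s.
Proof.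
move=> st incr; set K := c * (t - s) + (g t - g s).
have mesh n : (0 < n)%N -> f t - f s <= (t - s) * K / n%:R.
  by move=> n0; rewrite mulrAC; exact: small_increments_mesh.
have [K0|K0] := leP K 0.
  have := mesh 1%N erefl; rewrite divr1.
  have : (t - s) * K <= 0 by rewrite mulr_ge0_le0 ?subr_ge0.
  lra.
rewrite leNgt; apply/negP => ft_gt.
have d0 : 0 < f t - f s by lra.
have M0 : 0 <= (t - s) * K / (f t - f s).
  by rewrite divr_ge0 ?mulr_ge0 ?subr_ge0 //; exact: ltW.
have Mn := archi_boundP M0; set n := Num.bound _ in Mn.
have n0 : (0 < n)%N by rewrite -(ltr_nat R); apply: le_lt_trans Mn.
have nR : 0 < n%:R :> R by rewrite ltr0n.
have : (t - s) * K < (f t - f s) * n%:R by rewrite -ltr_pdivrMl // mulrC.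
rewrite -ltr_pdivrMr //; have := mesh n n0; lra.
Qed.

Lemma gronwall_increments f g (m c B s t : R) :
  0 < m -> 0 <= c -> s <= t ->
  (forall u, s <= u -> u <= t -> `|f u| <= B) ->
  (forall u v, s <= u -> u <= v -> v <= t -> g u <= g v) ->
  (forall u v, s <= u -> u <= v -> v <= t ->
     f v - f u <= (v - u) * (- m * f u) + (v - u) * (c * (v - u) + (g v - g u))) ->
  expR (m * t) * f t <= expR (m * s) * f s.
Proof.
move=> m0 c0 st fB g_mono incr.
apply: (@le_of_small_increments (fun u => expR (m * u) * f u)
  (fun u => expR (m * t) * g u) (expR (m * t) * (m * m * B + c)) _ _ st).
move=> u v su uv vt; set eT := expR (m * t); set d := v - u.
have d0 : 0 <= d by rewrite subr_ge0.
have md0 : 0 <= m * d by rewrite mulr_ge0 // ltW.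
set err := c * d + (g v - g u).
have err0 : 0 <= err by rewrite addr_ge0 ?mulr_ge0 // subr_ge0 g_mono.
set emv := expR (m * v); set eh := expR (- (m * d)).
have emv0 : 0 < emv := expR_gt0 _.
have emvT : emv <= eT by rewrite ler_expR ler_wpM2l // ltW.
have emu : expR (m * u) = emv * eh by rewrite -expRD; congr expR; rewrite /d; ring.
have eh_lb : 1 - m * d <= eh by have := expR_ge1Dx (- (m * d)).
have eh_ub := expRN_le_taylor2 md0; rewrite -/eh in eh_ub.
have B0 : 0 <= B := le_trans (normr_ge0 _) (fB u su (le_trans uv vt)).
have fuB := fB u su (le_trans uv vt).
(* e^(-md) = 1 - md + O((md)^2): the quadratic remainder is paid for by [|f| <= B] *)
have taylor : emv * (1 - eh - m * d) * f u <= eT * ((m * d) * (m * d)) * B.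
  have a1 : `|1 - eh - m * d| <= (m * d) * (m * d).
    by rewrite ler_norml; apply/andP; split; lra.
  have a2 : (1 - eh - m * d) * f u <= (m * d) * (m * d) * B.
    apply: le_trans (ler_norm _) _; rewrite normrM.
    by apply: ler_pM => //; exact: normr_ge0.
  rewrite -[leLHS]mulrA; apply: le_trans (ler_wpM2l (ltW emv0) a2) _.
  rewrite [leLHS]mulrA; apply: ler_wpM2r => //.
  by apply: ler_wpM2r => //; rewrite mulr_ge0.
have fv_le : emv * f v <= emv * (f u + d * (- m * f u) + d * err).
  by apply: ler_wpM2l; [exact: ltW | have := incr u v su uv vt; rewrite -/d -/err; lra].
have errT : emv * (d * err) <= eT * (d * err) by apply: ler_wpM2r; rewrite ?mulr_ge0.
rewrite emu.
have -> : d * (eT * (m * m * B + c) * d + (eT * g v - eT * g u)) =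
  eT * ((m * d) * (m * d)) * B + eT * (d * err) by rewrite /err; ring.
have : emv * (f u + d * (- m * f u) + d * err) =
  emv * (1 - eh - m * d) * f u + emv * eh * f u + emv * (d * err) by ring.
lra.
Qed.

End increments.

Section ae_le_Rintegral.
Context d (T : measurableType d) (R : realType) (mu : {measure set T -> \bar R}).

Lemma ae_le_Rintegral (D : set T) (f g : T -> R) : measurable D ->
  mu.-integrable D (EFin \o f) -> mu.-integrable D (EFin \o g) ->
  {ae mu, forall x, D x -> f x <= g x} ->
  \int[mu]_(x in D) f x <= \int[mu]_(x in D) g x.
Proof.
move=> mD If Ig [N [mN N0 fgN]].
rewrite /Rintegral (negligible_integral mN mD If N0) (negligible_integral mN mD Ig N0).
have mDN : measurable (D `\` N) by exact: measurableD.
apply: (@le_Rintegral _ _ R mu (D `\` N) f g mDN).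
- exact: integrableS If.
- exact: integrableS Ig.
- move=> x [Dx Nx]; apply: contrapT => fgx; apply/Nx/fgN => /=.
  by move/(_ Dx).
Qed.

End ae_le_Rintegral.

Section lebesgue_itv.
Context {R : realType}.
Local Notation mu := (@lebesgue_measure R).

Lemma integrable_cst_itv_oc (c u v : R) : mu.-integrable `]u, v] (EFin \o cst c).
Proof.
apply: measurable_bounded_integrable => //; last exact: bounded_cst.
have /= -> := @lebesgue_measure_itv R `]u, v].
by case: ifPn => // _; rewrite -EFinB ltry.
Qed.

Lemma Rintegral_cst_itv_oc (c u v : R) : u <= v ->
  \int[mu]_(x in `]u, v]) c = c * (v - u).
Proof.
move=> uv; rewrite Rintegral_cst //.
have /= -> := @lebesgue_measure_itv R `]u, v].
case: ifPn => [_|]; first by rewrite -EFinB.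
rewrite lte_fin -leNgt => vu.
by rewrite [v](@le_anti _ _ v u) ?vu ?uv // subrr mulr0.
Qed.

Lemma integrable_itv_oc (f : R -> R) (T u v : R) :
  mu.-integrable `[0, T] (EFin \o f) -> 0 <= u -> v <= T ->
  mu.-integrable `]u, v] (EFin \o f).
Proof.
move=> If u0 vT; apply: integrableS If => //.
by apply: subset_itv; rewrite bnd_simp.
Qed.

Lemma integrable_itv_cc0 (f : R -> R) (T v : R) :
  mu.-integrable `[0, T] (EFin \o f) -> v <= T ->
  mu.-integrable `[0, v] (EFin \o f).
Proof.
move=> If vT; apply: integrableS If => //.
by apply: subset_itv; rewrite bnd_simp.
Qed.

Lemma Rintegral_itv_cc0B (f : R -> R) (T u v : R) :
  mu.-integrable `[0, T] (EFin \o f) -> 0 <= u -> u <= v -> v <= T ->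
  \int[mu]_(x in `[0, v]) f x - \int[mu]_(x in `[0, u]) f x =
  \int[mu]_(x in `]u, v]) f x.
Proof.
move=> If u0 uv vT; rewrite Rintegral_itvB //.
exact: integrable_itv_cc0 If vT.
Qed.

Lemma le_Rintegral_itv_cc0 (f : R -> R) (T u v : R) :
  mu.-integrable `[0, T] (EFin \o f) -> (forall x, 0 < x -> 0 <= f x) ->
  0 <= u -> u <= v -> v <= T ->
  \int[mu]_(x in `[0, u]) f x <= \int[mu]_(x in `[0, v]) f x.
Proof.
move=> If f0 u0 uv vT; rewrite -subr_ge0 (Rintegral_itv_cc0B If u0 uv vT).
apply: Rintegral_ge0 => x; rewrite /= in_itv /= => /andP[ux _].
exact/f0/(le_lt_trans u0 ux).
Qed.

Lemma integrable_expRM (y : R -> R) (k r : R) : 0 <= k ->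
  mu.-integrable `[0, r] (EFin \o y) ->
  mu.-integrable `[0, r] (EFin \o (fun tau => expR (k * tau) * y tau)).
Proof.
move=> k0 Iy.
have me : measurable_fun `[0, r] (fun tau : R => expR (k * tau)).
  by apply: measurableT_comp => //; exact: measurable_funM.
have be : [bounded expR (k * tau) | tau in `[0, r]].
  exists (expR (k * r)); split; first exact: num_real.
  move=> M kM tau; rewrite /= in_itv /= => /andP[_ tr].
  rewrite ger0_norm ?expR_ge0 //; apply/ltW/(le_lt_trans _ kM).
  by rewrite ler_expR ler_wpM2l.
by apply: (eq_integrable _ _ _ _
  (integrableMr (D := `[0, r]) (mu := mu) (measurable_itv _) me be Iy)).
Qed.

End lebesgue_itv.

Section primitive.
Context {R : realType}.
Local Notation mu := (@lebesgue_measure R).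
Variables (F f : R -> R) (T : R).
Hypothesis If : mu.-integrable `[0, T] (EFin \o f).
Hypothesis F_primitive : forall t, 0 <= t -> F t = F 0 + \int[mu]_(x in `[0, t]) f x.

Lemma primitive_increment u v : 0 <= u -> u <= v -> v <= T ->
  F v - F u = \int[mu]_(x in `]u, v]) f x.
Proof.
move=> u0 uv vT; rewrite (F_primitive (le_trans u0 uv)) (F_primitive u0).
by rewrite -(Rintegral_itv_cc0B If u0 uv vT); ring.
Qed.

Lemma primitive_increment_le_variation u r v : 0 <= u -> u <= r -> r <= v -> v <= T ->
  `|F r - F u| <= \int[mu]_(x in `[0, v]) `|f x| - \int[mu]_(x in `[0, u]) `|f x|.
Proof.
move=> u0 ur rv vT; have rT := le_trans rv vT.
rewrite (primitive_increment u0 ur rT).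
have Iuv := integrable_itv_oc If u0 rT.
apply: le_trans (le_normr_Rintegral _ Iuv) _ => //.
rewrite -(Rintegral_itv_cc0B (integrable_norm If) u0 ur rT) lerD2r.
apply: (le_Rintegral_itv_cc0 (integrable_norm If) _ (le_trans u0 ur) rv vT) => x _.
exact: normr_ge0.
Qed.

Lemma primitive_bounded r : 0 <= r -> r <= T ->
  `|F r| <= `|F 0| + \int[mu]_(x in `[0, T]) `|f x|.
Proof.
move=> r0 rT; have := primitive_increment_le_variation (lexx 0) r0 rT (lexx T).
rewrite set_itv1 Rintegral_set1 subr0 => var.
rewrite -[F r](subrK (F 0)) addrC.
by apply: le_trans (ler_normD _ _) _; rewrite lerD2l.
Qed.

End primitive.

Section decay.
Context {R : realType}.
Local Notation mu := (@lebesgue_measure R).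

Lemma le_expR_decay (xi dxi : R -> R) (T : R) :
  mu.-integrable `[0, T] (EFin \o dxi) ->
  (forall t, 0 <= t -> xi t = xi 0 + \int[mu]_(x in `[0, t]) dxi x) ->
  {ae mu, forall t, 0 < t -> dxi t <= - (xi 0 * xi t)} ->
  0 < xi 0 -> 0 <= T ->
  xi T <= xi 0 * expR (- (xi 0 * T)).
Proof.
move=> If xi_prim ae_decay k0 T0; set k := xi 0 in k0 ae_decay *.
pose G u := \int[mu]_(x in `[0, u]) `|dxi x|.
have G_mono u v : 0 <= u -> u <= v -> v <= T -> G u <= G v.
  move=> u0 uv vT; apply: (le_Rintegral_itv_cc0 (integrable_norm If)) => // x _.
  exact: normr_ge0.
have := @gronwall_increments _ xi (fun u => k * G u) k 0 (`|k| + G T) 0 T k0 (lexx 0) T0.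
rewrite mulr0 expR0 mul1r => decay.
suff /(ler_wpM2r (expR_ge0 (- (k * T)))) : expR (k * T) * xi T <= k.
  by rewrite mulrAC expRxMexpNx_1 mul1r.
apply: decay => [u u0 uT|u v u0 uv vT|u v u0 uv vT].
- exact: primitive_bounded.
- by apply: ler_wpM2l; [exact: ltW | exact: G_mono].
rewrite (primitive_increment If xi_prim u0 uv vT).
have xi_lb r : u <= r -> r <= v -> xi u - (G v - G u) <= xi r.
  move=> ur rv; have := primitive_increment_le_variation If xi_prim u0 ur rv vT.
  by rewrite -/(G v) -/(G u) => /ler_normlP[? _]; lra.
have : \int[mu]_(x in `]u, v]) dxi x <=
    \int[mu]_(x in `]u, v]) (- k * (xi u - (G v - G u))).
  apply: ae_le_Rintegral => //.
  - exact: integrable_itv_oc If u0 vT.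
  - exact: integrable_cst_itv_oc.
  apply: filterS ae_decay; first exact: (ae_filter_ringOfSetsType mu).
  move=> r dxi_r; rewrite /= in_itv /= => /andP[ur rv].
  have := dxi_r (le_lt_trans u0 ur); have := xi_lb r (ltW ur) rv; nra.
rewrite Rintegral_cst_itv_oc //.
by have -> : (v - u) * (- k * xi u) + (v - u) * (0 * (v - u) + (k * G v - k * G u)) =
  - k * (xi u - (G v - G u)) * (v - u) by ring.
Qed.

Lemma kconv0_le_expR (xi y : R -> R) (k r : R) : 0 < k -> 0 < r ->
  measurable_fun (`[0, +oo[ : set R) xi ->
  (forall u, 0 <= u -> 0 <= xi u) ->
  (forall u, 0 <= u -> xi u <= k * expR (- (k * u))) ->
  mu.-integrable `[0, r] (EFin \o y) ->
  (forall u, 0 < u -> 0 <= y u) ->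
  kconv0 xi y r <=
  k * (expR (- (k * r)) * \int[mu]_(tau in `[0, r]) (expR (k * tau) * y tau)).
Proof.
move=> k0 r0 mxi xi0 xi_decay Iy y0.
have mxi_r : measurable_fun `[0, r] (fun tau : R => xi (r - tau)).
  apply: (measurable_comp _ _ mxi) => //.
  - move=> _ [tau /= + <-]; rewrite !in_itv /= => /andP[_ tr].
    by rewrite andbT subr_ge0.
  - exact: measurable_funB.
have bxi_r : [bounded xi (r - tau) | tau in `[0, r]].
  exists k; split; first exact: num_real.
  move=> M kM tau; rewrite /= in_itv /= => /andP[t0 tr].
  have rt0 : 0 <= r - tau by rewrite subr_ge0.
  rewrite ger0_norm ?xi0 //; apply/ltW/(le_lt_trans _ kM)/(le_trans (xi_decay _ rt0)).
  by apply: ler_piMr; [exact: ltW | rewrite expR_le1 oppr_le0 mulr_ge0 // ltW].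
have Iconv : mu.-integrable `[0, r] (EFin \o (fun tau => xi (r - tau) * y tau)).
  by apply: (eq_integrable _ _ _ _
    (integrableMr (D := `[0, r]) (mu := mu) (measurable_itv _) mxi_r bxi_r Iy)).
have Iexp : mu.-integrable `[0, r]
    (EFin \o (fun tau => k * expR (- (k * r)) * (expR (k * tau) * y tau))).
  by apply: (eq_integrable _ _ _ _ (integrableZl (mu := mu) (measurable_itv _)
    (k * expR (- (k * r))) (integrable_expRM (ltW k0) Iy))).
have sub0 : `]0, r] `<=` `[0, r] by apply: subset_itv; rewrite bnd_simp.
(* [y 0] may be negative, so the integrands are compared on [ ]0, r] ] only *)
rewrite mulrA -RintegralZl //; last exact: integrable_expRM (ltW k0) Iy.
rewrite /kconv0.
rewrite -[leLHS]Rintegral_itv_obnd_cbnd; last exact: integrableS Iconv.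
rewrite -[leRHS]Rintegral_itv_obnd_cbnd; last exact: integrableS Iexp.
apply: le_Rintegral => //; [exact: integrableS Iconv|exact: integrableS Iexp|].
move=> tau; rewrite /= in_itv /= => /andP[t0 tr].
have rt0 : 0 <= r - tau by rewrite subr_ge0.
rewrite mulrA; apply: ler_wpM2r; first exact: y0.
apply: le_trans (xi_decay _ rt0) _.
by rewrite -mulrA -expRD; have -> : - (k * r) + k * tau = - (k * (r - tau)) by ring.
Qed.

End decay.

Section comparison.
Context {R : realType}.
Local Notation mu := (@lebesgue_measure R).
Variables (xi x dx y : R -> R) (a C delta T : R).
Local Notation k := (xi 0).
Local Notation m := (Num.min a (xi 0 * (1 - delta))).
Hypotheses (k_gt0 : 0 < k) (m_gt0 : 0 < m) (a_gt0 : 0 < a) (C_gt0 : 0 < C)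
  (delta_gt0 : 0 < delta) (T_gt0 : 0 < T).
Hypothesis xi_measurable : measurable_fun (`[0, +oo[ : set R) xi.
Hypothesis xi_ge0 : forall u, 0 <= u -> 0 <= xi u.
Hypothesis xi_decay : forall u, 0 <= u -> xi u <= k * expR (- (k * u)).
Hypothesis Idx : mu.-integrable `[0, T] (EFin \o dx).
Hypothesis x_primitive : forall t, 0 <= t -> x t = x 0 + \int[mu]_(z in `[0, t]) dx z.
Hypothesis Iy : mu.-integrable `[0, T] (EFin \o y).
Hypothesis x_ge0 : forall t, 0 <= t -> 0 <= x t.
Hypothesis y_ge0 : forall t, 0 < t -> 0 <= y t.
Hypothesis x_ineq : {ae mu, forall t, 0 < t ->
  dx t + a * x t + y t <= C + delta * kconv0 xi y t}.

Let P s := \int[mu]_(tau in `[0, s]) (expR (k * tau) * y tau).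
Let Q s := expR (- (k * s)) * P s.
Let V s := \int[mu]_(z in `[0, s]) `|dx z|.
Let W s := x s + Q s - C / m.

Let IP := integrable_expRM (ltW k_gt0) Iy.

Let P_le u v : 0 <= u -> u <= v -> v <= T -> P u <= P v.
Proof.
move=> u0 uv vT; apply: (le_Rintegral_itv_cc0 IP) => // tau tau0.
by rewrite mulr_ge0 ?expR_ge0 ?y_ge0.
Qed.

Let P_ge0 u : 0 <= u -> u <= T -> 0 <= P u.
Proof.
move=> u0 uT; have := P_le (lexx 0) u0 uT.
by rewrite /P set_itv1 Rintegral_set1.
Qed.

Let expRN_le1 u : 0 <= u -> expR (- (k * u)) <= 1.
Proof. by move=> u0; rewrite expR_le1 oppr_le0 mulr_ge0 // ltW. Qed.

Let Q_ge0 u : 0 <= u -> u <= T -> 0 <= Q u.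
Proof. by move=> u0 uT; rewrite mulr_ge0 ?expR_ge0 ?P_ge0. Qed.

Let Q_le_P u : 0 <= u -> u <= T -> Q u <= P u.
Proof. by move=> u0 uT; apply: ler_piMl; [exact: P_ge0 | exact: expRN_le1]. Qed.

Let kconv0_le_Q r : 0 < r -> r <= T -> kconv0 xi y r <= k * Q r.
Proof.
move=> r0 rT; apply: kconv0_le_expR => //.
exact: integrable_itv_cc0 Iy rT.
Qed.

Let Q_le u r v : 0 <= u -> u <= r -> r <= v -> v <= T -> Q r <= Q u + (P v - P u).
Proof.
move=> u0 ur rv vT; have r0 := le_trans u0 ur; have rT := le_trans rv vT.
have Qr_le : Q r <= expR (- (k * u)) * P r.
  by apply: ler_wpM2r; rewrite ?P_ge0 // ler_expR lerN2 ler_wpM2l // ltW.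
have : expR (- (k * u)) * (P r - P u) <= P r - P u.
  by apply: ler_piMl; [rewrite subr_ge0 P_le | exact: expRN_le1].
have Qu : Q u = expR (- (k * u)) * P u by [].
have := P_le r0 rv vT; rewrite mulrBr; lra.
Qed.

Let Q_increment u v : 0 <= u -> u <= v -> v <= T ->
  Q v - Q u <= \int[mu]_(z in `]u, v]) y z - (k * (v - u)) * Q u
               + (k * (v - u)) * (k * (v - u)) * P T.
Proof.
move=> u0 uv vT; have uT := le_trans uv vT.
set h := k * (v - u); have h0 : 0 <= h by rewrite mulr_ge0 ?subr_ge0 // ltW.
set eh := expR (- h).
have ev : expR (- (k * v)) = expR (- (k * u)) * eh.
  by rewrite -expRD /h; congr expR; ring.
have IPuv := integrable_itv_oc IP u0 vT.
have Pincr : expR (- (k * v)) * (P v - P u) <= \int[mu]_(z in `]u, v]) y z.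
  rewrite (Rintegral_itv_cc0B IP u0 uv vT) -RintegralZl //.
  apply: le_Rintegral => //; last first.
  - move=> tau; rewrite /= in_itv /= => /andP[ut tv].
    rewrite mulrA; apply: ler_piMl; first exact/y_ge0/(le_lt_trans u0 ut).
    by rewrite -expRD expR_le1; have := ler_wpM2l (ltW k_gt0) tv; lra.
  - exact: integrable_itv_oc Iy u0 vT.
  - by apply: (eq_integrable _ _ _ _
      (integrableZl (mu := mu) (measurable_itv _) _ IPuv)).
have QT : Q u <= P T by apply: le_trans (Q_le_P u0 uT) (P_le u0 uT (lexx T)).
have taylor : Q u * eh <= Q u * (1 - h + h * h).
  by apply: ler_wpM2l; [exact: Q_ge0 | exact: expRN_le_taylor2].
have : Q u * (h * h) <= P T * (h * h) by apply: ler_wpM2r => //; exact: mulr_ge0.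
have -> : Q v - Q u = expR (- (k * v)) * (P v - P u) + Q u * eh - Q u.
  by rewrite /Q ev; ring.
lra.
Qed.

Let x_increment u v : 0 <= u -> u <= v -> v <= T ->
  x v - x u <=
    (v - u) * (C - a * x u + a * (V v - V u) + delta * k * (Q u + (P v - P u)))
    - \int[mu]_(z in `]u, v]) y z.
Proof.
move=> u0 uv vT; rewrite (primitive_increment Idx x_primitive u0 uv vT).
set K := C - a * x u + _ + _.
have Iyuv := integrable_itv_oc Iy u0 vT.
suff : \int[mu]_(z in `]u, v]) dx z <= \int[mu]_(z in `]u, v]) (K - y z).
  rewrite RintegralB //; last exact: integrable_cst_itv_oc.
  by rewrite Rintegral_cst_itv_oc // mulrC.
apply: ae_le_Rintegral => //.
- exact: integrable_itv_oc Idx u0 vT.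
- have := integrableB (mu := mu) (measurable_itv `]u, v])
    (integrable_cst_itv_oc K u v) Iyuv.
  by apply: eq_integrable.
apply: filterS x_ineq; first exact: (ae_filter_ringOfSetsType mu).
move=> r x_ineq_r; rewrite /= in_itv /= => /andP[ur rv].
have r0 := le_lt_trans u0 ur; have rT := le_trans rv vT.
have x_lb : x u - (V v - V u) <= x r.
  have := primitive_increment_le_variation Idx x_primitive u0 (ltW ur) rv vT.
  by move=> /ler_normlP[? _]; rewrite /V; lra.
have conv_le : delta * kconv0 xi y r <= delta * k * (Q u + (P v - P u)).
  rewrite -mulrA; apply: ler_wpM2l; first exact: ltW.
  apply: le_trans (kconv0_le_Q r0 rT) _; apply: ler_wpM2l; first exact: ltW.
  exact: Q_le (ltW ur) rv vT.
have := ler_wpM2l (ltW a_gt0) x_lb; have := x_ineq_r r0; rewrite /K; lra.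
Qed.

Let g s := a * V s + k * P s.

Let V_le u v : 0 <= u -> u <= v -> v <= T -> V u <= V v.
Proof.
move=> u0 uv vT; apply: (le_Rintegral_itv_cc0 (integrable_norm Idx)) => // z _.
exact: normr_ge0.
Qed.

Let W_increment u v : 0 <= u -> u <= v -> v <= T ->
  W v - W u <= (v - u) * (- m * W u) + (v - u) * (k * k * P T * (v - u) + (g v - g u)).
Proof.
move=> u0 uv vT; have uT := le_trans uv vT; set d := v - u.
have d0 : 0 <= d by rewrite subr_ge0.
have m_le_a : m <= a by rewrite ge_min lexx.
have m_le_k : m <= k * (1 - delta) by rewrite ge_min lexx orbT.
have delta_le1 : delta <= 1.
  by rewrite -subr_ge0 -(pmulr_rge0 _ k_gt0); apply/ltW/(lt_le_trans m_gt0).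
have dP0 : 0 <= P v - P u by rewrite subr_ge0 P_le.
have ax : d * (m * x u) <= d * (a * x u).
  by apply: ler_wpM2l => //; apply: ler_wpM2r; rewrite ?x_ge0.
have kQ : d * (m * Q u) <= d * (k * (1 - delta) * Q u).
  by apply: ler_wpM2l => //; apply: ler_wpM2r; rewrite ?Q_ge0.
have kP : d * (delta * k * (P v - P u)) <= d * (k * (P v - P u)).
  apply: ler_wpM2l => //; apply: ler_wpM2r => //.
  by rewrite ger_pMl // ltW.
have mC : m * (C / m) = C by rewrite mulrCA divff ?gt_eqF // mulr1.
have := x_increment u0 uv vT; have := Q_increment u0 uv vT.
rewrite /W /g -/d.
have -> : d * (- m * (x u + Q u - C / m)) = d * C - d * (m * x u) - d * (m * Q u).
  by rewrite -[in d * C]mC; ring.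
have -> : d * (k * k * P T * d + (a * V v + k * P v - (a * V u + k * P u))) =
  k * d * (k * d) * P T + d * (a * (V v - V u)) + d * (k * (P v - P u)) by ring.
have -> : d * (C - a * x u + a * (V v - V u) + delta * k * (Q u + (P v - P u))) =
  d * C - d * (a * x u) + d * (a * (V v - V u)) + d * (delta * k * Q u)
  + d * (delta * k * (P v - P u)) by ring.
have : d * (k * (1 - delta) * Q u) = k * d * Q u - d * (delta * k * Q u) by ring.
lra.
Qed.

Let W_bounded u : 0 <= u -> u <= T -> `|W u| <= `|x 0| + V T + P T + C / m.
Proof.
move=> u0 uT; have Cm0 : 0 <= C / m by rewrite divr_ge0 // ltW.
have := primitive_bounded Idx x_primitive u0 uT; rewrite ger0_norm ?x_ge0 // -/(V T).
have := Q_ge0 u0 uT; have := Q_le_P u0 uT; have := P_le u0 uT (lexx T); have := x_ge0 u0.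
by rewrite ler_norml /W; lra.
Qed.

Let W_decay : expR (m * T) * W T <= W 0.
Proof.
have := @gronwall_increments _ W g m (k * k * P T) (`|x 0| + V T + P T + C / m) 0 T.
rewrite mulr0 expR0 mul1r; apply.
- exact: m_gt0.
- by apply: mulr_ge0; [rewrite mulr_ge0 // ltW | exact: P_ge0 (ltW T_gt0) (lexx T)].
- exact: ltW.
- exact: W_bounded.
- move=> u v u0 uv vT; apply: lerD; apply: ler_wpM2l.
  + exact: ltW.
  + exact: V_le.
  + exact: ltW.
  + exact: P_le.
- exact: W_increment.
Qed.

Lemma x_le_max_init : x T <= Num.max (x 0) (C / m).
Proof.
have W0 : W 0 = x 0 - C / m by rewrite /W /Q /P set_itv1 Rintegral_set1 mulr0 addr0.
have QT := Q_ge0 (ltW T_gt0) (lexx T).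
rewrite le_max; have [WT_le0|WT_gt0] := leP (W T) 0.
  by apply/orP; right; move: WT_le0; rewrite /W; lra.
apply/orP; left.
have : W T <= expR (m * T) * W T.
  rewrite ler_pMl //; apply: le_trans (expR_ge1Dx _).
  by rewrite lerDl mulr_ge0 // ltW.
have := W_decay; rewrite W0 /W; lra.
Qed.

End comparison.

Unset Implicit Arguments. Set Strict Implicit.

Theorem lemma4p8 (R : realType) (xi dxi x dx y : R -> R) (a C delta : R) :
  W11 xi dxi ->
  (forall t, 0 <= t -> 0 <= xi t) ->
  {ae leb, forall t, 0 < t -> dxi t <= - (xi 0 * xi t)} ->
  W11loc x dx ->
  L1loc y ->
  (forall t, 0 <= t -> 0 <= x t) ->
  (forall t, 0 < t -> 0 <= y t) ->
  0 < a -> 0 < C -> 0 < delta < 1 ->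
  {ae leb, forall t, 0 < t ->
     dx t + a * x t + y t <= C + delta * kconv0 xi y t} ->
  0 < Num.min a (xi 0 * (1 - delta)) ->
  forall t, 0 < t ->
    x t <= Num.max (x 0) (C / Num.min a (xi 0 * (1 - delta))).
Proof.
move=> [L1xi [L1dxi xi_prim]] xi_ge0 ae_decay [L1dx x_prim] L1y x_ge0 y_ge0
  a_gt0 C_gt0 /andP[delta_gt0 delta_lt1] x_ineq m_gt0 t t_gt0.
have k_gt0 : 0 < xi 0.
  by move: m_gt0; rewrite lt_min => /andP[_]; rewrite pmulr_lgt0 // subr_gt0.
have xi_decay u : 0 <= u -> xi u <= xi 0 * expR (- (xi 0 * u)).
  move=> u0; apply: (le_expR_decay _ xi_prim ae_decay k_gt0 u0).
  by apply: integrableS L1dxi => //; apply: subset_itv; rewrite bnd_simp.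
have xi_measurable : measurable_fun (`[0, +oo[ : set R) xi.
  by have /integrableP[/measurable_EFinP] := L1xi.
exact: (x_le_max_init k_gt0 m_gt0 a_gt0 C_gt0 delta_gt0 t_gt0 xi_measurable
  xi_ge0 xi_decay (L1dx t t_gt0) x_prim (L1y t t_gt0) x_ge0 y_ge0 x_ineq).
Qed.
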